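(* Let $N$ be a finite set, $r\notin N$, $V=N\cup\{r\}$, and let $G=(V,E)$ be the complete graph on $V$ with edge weights $w:E\to\mathbb{R}$ taking the distinct values $w_1<\dots<w_k$. Then the graphs $G_i$, $i<k$, contain no bad holes and no bad induced diamonds if and only if the graphs $G_i$, $i<k$, contain no violated cycles.
   Context: $E_i=\{e\in E:w(e)\le w_i\}$, $G_i=(V,E_i)$. A hole is an induced cycle with at least four vertices; a hole in $G_i$ is bad if it contains a vertex $x\neq r$ with $rx\notin E_i$. A diamond is $K_4$ minus one edge; its tips are its two vertices of degree 2. For a cycle $C$ and a chord $f=xy$ of $C$, with $P_1,P_2$ the two $x$-$y$ paths of $C$, $f$ covers $C$ if $w(f)\ge w(e)$ for all $e\in E(P_1)$ or for all $e\in E(P_2)$; $C$ is well-covered if covered by all its chords (chords taken in the graph $G_i$ under consideration). An induced diamond in $G_i$ is bad if its Hamiltonian cycle is well-covered and at least one tip $x\ne r$ satisfies $rx\notin E_i$. A violated cycle in $G_i$ is a well-covered cycle of $G_i$ that contains two vertices non-adjacent in $G_i$ and contains a vertex $x\ne r$ with $rx\notin E_i$. *)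

From HB Require Import structures.
From mathcomp Require Import all_boot all_order all_algebra.
Set Implicit Arguments. Unset Strict Implicit. Unset Printing Implicit Defensive.
Import Order.TTheory GRing.Theory Num.Theory.
Local Open Scope ring_scope.

(* Complete graph on a finite vertex type V (V = N ∪ {r}); an edge is a pair
   x y with x != y; weight w x y (assumed symmetric). *)

Section Graph.
Variables (R : realDomainType) (V : finType) (w : V -> V -> R).

Definition adj (t : R) (x y : V) : bool := (x != y) && (w x y <= t).

(* t is one of the values w_1 < ... < w_{k-1}, i.e. a weight value w_i, i < k *)
Definition threshold (t : R) : Prop :=
  (exists x y, x != y /\ w x y = t) /\ (exists x y, x != y /\ t < w x y).

Definition is_cycle (t : R) (c : seq V) : Prop :=
  [/\ uniq c, 3 <= size c & cycle (adj t) c]%N.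

Definition cv (x0 : V) (c : seq V) (i : nat) : V := nth x0 c i.

Definition nonconsec (n i j : nat) : bool :=
  [&& i < j, j < n, j != i.+1 & ~~ ((i == 0) && (j == n.-1))]%N.

Definition cedge (x0 : V) (c : seq V) (k : nat) : R :=
  w (cv x0 c k) (cv x0 c (k.+1 %% size c)).

Definition covers (x0 : V) (c : seq V) (i j : nat) : Prop :=
  (forall k, (i <= k < j)%N -> cedge x0 c k <= w (cv x0 c i) (cv x0 c j)) \/
  (forall k, (k < size c)%N -> (k < i)%N || (j <= k)%N ->
     cedge x0 c k <= w (cv x0 c i) (cv x0 c j)).

Definition well_covered (t : R) (c : seq V) : Prop :=
  forall x0 i j, nonconsec (size c) i j -> adj t (cv x0 c i) (cv x0 c j) ->
    covers x0 c i j.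

Definition has_far_vertex (r : V) (t : R) (c : seq V) : Prop :=
  exists2 x, x \in c & (x != r) && ~~ adj t r x.

Definition bad_hole (r : V) (t : R) (c : seq V) : Prop :=
  [/\ is_cycle t c, (4 <= size c)%N,
      (forall x0 i j, nonconsec (size c) i j -> ~~ adj t (cv x0 c i) (cv x0 c j))
    & has_far_vertex r t c].

(* induced diamond with tips x y (non-adjacent) and degree-3 vertices u v;
   its Hamiltonian cycle is x u y v *)
Definition bad_diamond (r : V) (t : R) (x u y v : V) : Prop :=
  [/\ uniq [:: x; u; y; v],
      [&& adj t x u, adj t x v, adj t y u, adj t y v, adj t u v & ~~ adj t x y],
      well_covered t [:: x; u; y; v]
    & ((x != r) && ~~ adj t r x) || ((y != r) && ~~ adj t r y)].

Definition violated_cycle (r : V) (t : R) (c : seq V) : Prop :=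
  [/\ is_cycle t c, well_covered t c,
      (exists2 a, a \in c & exists2 b, b \in c & (a != b) && ~~ adj t a b)
    & has_far_vertex r t c].

End Graph.

(* Bad holes and bad induced diamonds are violated cycles. Conversely, let c be
   a violated cycle of G_t and assume that no shorter cycle is violated at any
   threshold. If c has no chord in G_t, it is a bad hole. Otherwise take a chord
   uv of minimum weight s, which is again a threshold. Since c is well covered,
   uv covers one of the two arcs of c it cuts off: that arc closes up to a cycle
   C1 of G_s, the other one to a cycle C2 of G_t. Both are well covered, because
   a chord of an arc is a chord of c, hence at least as heavy as uv, so that uv
   may replace the part of a covering path that leaves the arc. By minimality
   C1 and C2 are not violated, so each is a clique or has no vertex far from r,
   and a case analysis on u, v, a far vertex and a non-neighbour yields a bad
   hole through r or a bad diamond with middle edge uv. *)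

From HB Require Import structures.
From mathcomp Require Import all_boot all_order all_algebra zify.
From Stdlib Require Import Classical.
Set Implicit Arguments. Unset Strict Implicit. Unset Printing Implicit Defensive.
Import Order.TTheory GRing.Theory Num.Theory.

Lemma modn_double n x : x < n + n -> x %% n = if x < n then x else x - n.
Proof.
move=> lt_x_2n; case: ltnP => [/modn_small //| le_n_x].
by rewrite -{1}(subnK le_n_x) modnDr modn_small //; lia.
Qed.

Lemma cycle_nthP (T : eqType) (e : rel T) (c : seq T) x0 :
  cycle e c <->
  forall k, k < size c -> e (nth x0 c k) (nth x0 c (k.+1 %% size c)).
Proof.
case: c => [|x p] //=.
have nth_closed k : k < (size p).+1 ->
    nth x0 (x :: rcons p x) k = nth x0 (x :: p) k.
  by case: k => [|k] //= lt_k; rewrite nth_rcons; case: ltngtP => //; lia.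
have nth_next k : k < (size p).+1 ->
    nth x0 (rcons p x) k = nth x0 (x :: p) (k.+1 %% (size p).+1).
  move=> lt_k; rewrite nth_rcons.
  by case: (ltngtP k (size p)) => [lt_kp|gt_kp|->]; [rewrite modn_small | lia | rewrite modnn].
split=> [/(pathP x0) e_p k lt_k | e_c].
  by rewrite -nth_closed // -nth_next //; apply: e_p; rewrite size_rcons.
by apply/(pathP x0) => k; rewrite size_rcons => lt_k; rewrite nth_closed // nth_next //; apply: e_c.
Qed.

Lemma cycle_nth (T : eqType) (e : rel T) (c : seq T) x0 k :
  cycle e c -> 0 < size c ->
  e (nth x0 c (k %% size c)) (nth x0 c (k.+1 %% size c)).
Proof.
move=> /(cycle_nthP _ _ x0) e_c c_gt0; have := e_c _ (ltn_pmod k c_gt0).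
by rewrite -addn1 modnDml addn1.
Qed.

Section Arc.
Variables (T : eqType) (x0 : T) (c : seq T).
Local Notation n := (size c).

Definition arc a len := mkseq (fun p => nth x0 c ((a + p) %% n)) len.

Lemma size_arc a len : size (arc a len) = len.
Proof. exact: size_mkseq. Qed.

Lemma nth_arc y0 a len p :
  p < len -> nth y0 (arc a len) p = nth x0 c ((a + p) %% n).
Proof. exact: nth_mkseq. Qed.

Lemma mem_arcP a len x :
  reflect (exists2 p, p < len & x = nth x0 c ((a + p) %% n)) (x \in arc a len).
Proof.
apply: (iffP mapP) => [[p] | [p lt_p ->]]; last by exists p; rewrite ?mem_iota.
by rewrite mem_iota add0n => lt_p ->; exists p.
Qed.

Lemma arc_uniq a len : uniq c -> a < n -> len <= n -> uniq (arc a len).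
Proof.
move=> uc lt_a le_len; rewrite map_inj_in_uniq ?iota_uniq // => p q.
rewrite !mem_iota !add0n => lt_p lt_q /eqP.
rewrite nth_uniq ?ltn_pmod //; try lia.
by rewrite !modn_double; try lia; case: ifP => h1; case: ifP => h2 /eqP; lia.
Qed.

Lemma arc_cycle (e : rel T) a d : 0 < n ->
  (forall k, k < d -> e (nth x0 c ((a + k) %% n)) (nth x0 c ((a + k).+1 %% n))) ->
  e (nth x0 c ((a + d) %% n)) (nth x0 c (a %% n)) ->
  cycle e (arc a d.+1).
Proof.
move=> n_gt0 e_in e_last; apply/(cycle_nthP _ _ x0) => k; rewrite size_arc => lt_k.
case: (ltnP k d) => [lt_kd | le_dk].
  by rewrite (modn_small (_ : k.+1 < d.+1)) // !nth_arc // addnS; apply: e_in.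
have -> : k = d by lia.
by rewrite modnn !nth_arc // addn0.
Qed.

Lemma mem_arc_split i j x : i < j -> j < n -> x \in c ->
  x \in arc i (j - i).+1 \/ x \in arc j (n - (j - i)).+1.
Proof.
move=> lt_ij lt_j /(nthP x0) [k lt_k <-].
case: (leqP i k) => le_ik; [case: (leqP k j) => le_kj|].
- by left; apply/mem_arcP; exists (k - i); [lia | rewrite subnKC // modn_small].
- by right; apply/mem_arcP; exists (k - j); [lia | rewrite subnKC ?modn_small //; lia].
- right; apply/mem_arcP; exists (n - j + k); first lia.
  by rewrite (_ : j + (n - j + k) = k + n); [rewrite modnDr modn_small //; lia | lia].
Qed.

End Arc.

Section Weights.
Variables (R : realDomainType) (V : finType) (w : V -> V -> R).
Hypothesis wsym : forall x y, w x y = w y x.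

Lemma adjC t x y : adj w t x y = adj w t y x.
Proof. by rewrite /adj eq_sym wsym. Qed.

Lemma adj_mono s t x y : (s <= t)%R -> adj w s x y -> adj w t x y.
Proof. by move=> le_st /andP[neq_xy le_xy]; rewrite /adj neq_xy (le_trans le_xy le_st). Qed.

Lemma adj_neq t x y : adj w t x y -> x != y.
Proof. by case/andP. Qed.

Lemma adj_le t x y : adj w t x y -> (w x y <= t)%R.
Proof. by case/andP. Qed.

Lemma threshold_adj t x y : threshold w t -> adj w t x y -> threshold w (w x y).
Proof.
move=> [_ [x' [y' [neq_xy' lt_t]]]] /andP[neq_xy le_t]; split; first by exists x, y.
by exists x', y'; split; last exact: le_lt_trans lt_t.
Qed.

Section CycleWeights.
Variables (x0 : V) (c : seq V).
Local Notation n := (size c).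

Definition edgew k := w (nth x0 c (k %% n)) (nth x0 c (k.+1 %% n)).

Lemma edgew_modl a k : edgew (a %% n + k) = edgew (a + k).
Proof. by rewrite /edgew modnDml -!addnS modnDml. Qed.

Lemma edgew_addn k : edgew (k + n) = edgew k.
Proof. by rewrite /edgew modnDr -addSn modnDr. Qed.

Lemma cedge_edgew k : k < n -> cedge w x0 c k = edgew k.
Proof. by move=> lt_k; rewrite /cedge /edgew /cv (modn_small lt_k). Qed.

Definition arc_le a d W := forall k, k < d -> (edgew (a + k) <= W)%R.

Lemma arc_le_mod a d W : arc_le (a %% n) d W <-> arc_le a d W.
Proof. by split=> le_W k lt_k; have := le_W k lt_k; rewrite edgew_modl. Qed.

Lemma covers_arc i j : i < j -> j < n ->
  covers w x0 c i j <->
  arc_le i (j - i) (w (cv x0 c i) (cv x0 c j)) \/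
  arc_le j (n - (j - i)) (w (cv x0 c i) (cv x0 c j)).
Proof.
move=> lt_ij lt_jn; set W := w _ _.
have inner : (forall k, i <= k < j -> (cedge w x0 c k <= W)%R) <-> arc_le i (j - i) W.
  split=> le_W k lt_k.
    by rewrite -cedge_edgew; [apply: le_W | ]; lia.
  rewrite cedge_edgew; last lia.
  have -> : k = i + (k - i) by lia.
  by apply: le_W; lia.
have outer : (forall k, k < n -> (k < i) || (j <= k) -> (cedge w x0 c k <= W)%R) <->
             arc_le j (n - (j - i)) W.
  split=> le_W k lt_k.
    case: (ltnP (j + k) n) => [lt_jk | le_jk].
      by rewrite -cedge_edgew //; apply: le_W => //; lia.
    have -> : j + k = j + k - n + n by lia.
    by rewrite edgew_addn -cedge_edgew; [apply: le_W | ]; lia.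
  move=> out_k; rewrite cedge_edgew //.
  case: (leqP j k) => [le_jk | lt_kj].
    have -> : k = j + (k - j) by lia.
    by apply: le_W; lia.
  by rewrite -edgew_addn (_ : k + n = j + (k + n - j)); [apply: le_W | ]; lia.
by rewrite /covers inner outer.
Qed.

End CycleWeights.

Lemma edgew_arc x0 y0 (c : seq V) a len p :
  p.+1 < len -> edgew y0 (arc x0 c a len) p = edgew x0 c (a + p).
Proof.
move=> lt_p; rewrite /edgew size_arc !(@modn_small _ len) ?nth_arc ?addnS //; lia.
Qed.

Lemma edgew_arc_last x0 y0 (c : seq V) a d :
  edgew y0 (arc x0 c a d.+1) d = w (nth x0 c ((a + d) %% size c)) (nth x0 c (a %% size c)).
Proof. by rewrite /edgew size_arc modn_small // modnn !nth_arc // addn0. Qed.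

Lemma arc_le_inner x0 y0 (c : seq V) a d p q W : p <= q <= d ->
  arc_le x0 c (a + p) (q - p) W -> arc_le y0 (arc x0 c a d.+1) p (q - p) W.
Proof. by move=> le_pqd le_W k lt_k; rewrite edgew_arc ?addnA; [apply: le_W | lia]. Qed.

Lemma arc_le_outer x0 y0 (c : seq V) a d p q W : p <= q <= d -> d < size c ->
  (w (nth x0 c ((a + d) %% size c)) (nth x0 c (a %% size c)) <= W)%R ->
  arc_le x0 c (a + q) (size c - (q - p)) W ->
  arc_le y0 (arc x0 c a d.+1) q (d.+1 - (q - p)) W.
Proof.
move=> le_pqd lt_dn le_last le_W k lt_k.
case: (ltngtP (q + k) d) => [lt_qkd | gt_qkd | ->]; last by rewrite edgew_arc_last.
  by rewrite edgew_arc ?addnA; [apply: le_W | ]; lia.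
rewrite (_ : q + k = q + k - d.+1 + size (arc x0 c a d.+1)); last by rewrite size_arc; lia.
rewrite edgew_addn edgew_arc; last lia.
rewrite -edgew_addn (_ : a + _ + _ = a + q + (k + size c - d.+1)); last lia.
by apply: le_W; lia.
Qed.

Lemma chord_cases n P Q m : (P + m) %% n = Q -> P < n -> 2 <= m -> m + 2 <= n ->
  nonconsec n P Q /\ Q - P = m \/ nonconsec n Q P /\ P - Q = n - m.
Proof.
move=> <- lt_Pn m_ge2 m_le; rewrite modn_double; last lia.
by case: ltnP => ?; [left | right]; rewrite /nonconsec; split; lia.
Qed.

Definition chords_above t x0 c s := forall i j,
  nonconsec (size c) i j -> adj w t (cv x0 c i) (cv x0 c j) -> (s <= w (cv x0 c i) (cv x0 c j))%R.

Section Chord.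
Variables (t : R) (x0 : V) (c : seq V) (P Q m : nat).
Hypotheses (PmQ : (P + m) %% size c = Q) (lt_P : P < size c).
Hypotheses (m_ge2 : 2 <= m) (m_le : m + 2 <= size c).
Hypothesis adj_PQ : adj w t (nth x0 c P) (nth x0 c Q).

Lemma chords_above_at s : chords_above t x0 c s -> (s <= w (nth x0 c P) (nth x0 c Q))%R.
Proof.
move=> above; case: (chord_cases PmQ lt_P m_ge2 m_le) => [[ncPQ _] | [ncQP _]].
  exact: above.
by rewrite wsym; apply: above; rewrite // adjC.
Qed.

Lemma covers_chord : well_covered w t c ->
  arc_le x0 c P m (w (nth x0 c P) (nth x0 c Q)) \/
  arc_le x0 c Q (size c - m) (w (nth x0 c P) (nth x0 c Q)).
Proof.
have lt_Q : Q < size c by rewrite -PmQ ltn_pmod //; lia.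
move=> wc; case: (chord_cases PmQ lt_P m_ge2 m_le) => [[ncPQ dPQ] | [ncQP dQP]].
  have := wc x0 P Q ncPQ adj_PQ; rewrite (covers_arc x0 (_ : P < Q) lt_Q) ?dPQ //; lia.
have := wc x0 Q P ncQP; rewrite /cv adjC => /(_ adj_PQ).
rewrite (covers_arc x0 (_ : Q < P) lt_P) ?dQP /cv 1?wsym; last lia.
by rewrite (_ : size c - (size c - m) = m); [case; [right | left] | lia].
Qed.

End Chord.

Lemma arc_well_covered t t' x0 (c : seq V) a d : (t' <= t)%R -> 2 <= d -> d + 2 <= size c ->
  well_covered w t c ->
  chords_above t x0 c (w (nth x0 c ((a + d) %% size c)) (nth x0 c (a %% size c))) ->
  well_covered w t' (arc x0 c a d.+1).
Proof.
move=> le_t't d_ge2 d_le wc above y0 p q.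
rewrite /nonconsec size_arc => /and4P[lt_pq lt_qd ne_qp not_ends] adj_pq.
have cv_arc k : k < d.+1 -> cv y0 (arc x0 c a d.+1) k = nth x0 c ((a + k) %% size c).
  exact: nth_arc.
have PmQ : ((a + p) %% size c + (q - p)) %% size c = (a + q) %% size c.
  by rewrite modnDml -addnA subnKC // ltnW.
have lt_P : (a + p) %% size c < size c by rewrite ltn_pmod //; lia.
move: adj_pq; rewrite !cv_arc ?(ltn_trans lt_pq) // => /(adj_mono le_t't) adj_pq.
apply/(covers_arc y0 lt_pq); first by rewrite size_arc.
rewrite !cv_arc ?(ltn_trans lt_pq) // size_arc.
have m_ge2 : 2 <= q - p by lia.
have m_le : q - p + 2 <= size c by lia.
case: (covers_chord PmQ lt_P m_ge2 m_le adj_pq wc) => le_W; [left | right].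
  by apply: arc_le_inner; [lia | apply/arc_le_mod].
(* The closing edge of the arc stands in for the part of the outer path that
   the arc omits; it is no heavier than any chord of c. *)
apply: arc_le_outer; [lia | lia | | by apply/arc_le_mod].
exact: (chords_above_at PmQ lt_P m_ge2 m_le adj_pq).
Qed.

Lemma chordless_or_min_chord t x0 (c : seq V) :
  (forall i j, nonconsec (size c) i j -> ~~ adj w t (cv x0 c i) (cv x0 c j)) \/
  exists i j, [/\ nonconsec (size c) i j, adj w t (cv x0 c i) (cv x0 c j)
              & chords_above t x0 c (w (cv x0 c i) (cv x0 c j))].
Proof.
pose chord (p : 'I_(size c) * 'I_(size c)) :=
  nonconsec (size c) p.1 p.2 && adj w t (cv x0 c p.1) (cv x0 c p.2).
have chord_ord i j : nonconsec (size c) i j -> adj w t (cv x0 c i) (cv x0 c j) ->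
    exists p, [/\ chord p, nat_of_ord p.1 = i & nat_of_ord p.2 = j].
  move=> ncij adj_ij; have [lt_i lt_j] : i < size c /\ j < size c.
    by move: ncij; rewrite /nonconsec; lia.
  by exists (Ordinal lt_i, Ordinal lt_j); rewrite /chord /= ncij.
case: (pickP chord) => [p0 chord_p0 | no_chord]; [right | left]; last first.
  move=> i j ncij; apply/negP => /(chord_ord _ _ ncij)[p [chord_p _ _]].
  by rewrite no_chord in chord_p.
have [[i j] /andP[ncij adj_ij] min_ij] :=
  arg_minP (fun p : 'I_(size c) * 'I_(size c) => w (cv x0 c p.1) (cv x0 c p.2)) chord_p0.
by exists i, j; split=> // i' j' /chord_ord/[apply] -[p [chord_p <- <-]]; apply: min_ij.
Qed.

Lemma arc_is_cycle t x0 (c : seq V) a d : uniq c -> a < size c -> 2 <= d < size c ->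
  (forall k, k < d ->
     adj w t (nth x0 c ((a + k) %% size c)) (nth x0 c ((a + k).+1 %% size c))) ->
  adj w t (nth x0 c ((a + d) %% size c)) (nth x0 c (a %% size c)) ->
  is_cycle w t (arc x0 c a d.+1).
Proof.
move=> uc lt_a d_bounds adj_in adj_last.
have n_gt0 : 0 < size c by lia.
have le_dn : d.+1 <= size c by lia.
split; [exact: arc_uniq | by rewrite size_arc; lia | exact: arc_cycle].
Qed.

Lemma min_chord_arc t s x0 (c : seq V) a d : is_cycle w t c -> well_covered w t c ->
  a < size c -> 2 <= d -> d + 2 <= size c ->
  adj w t (nth x0 c ((a + d) %% size c)) (nth x0 c (a %% size c)) ->
  w (nth x0 c ((a + d) %% size c)) (nth x0 c (a %% size c)) = s ->
  chords_above t x0 c s ->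
  [/\ is_cycle w t (arc x0 c a d.+1), well_covered w t (arc x0 c a d.+1)
    & arc_le x0 c a d s ->
      is_cycle w s (arc x0 c a d.+1) /\ well_covered w s (arc x0 c a d.+1)].
Proof.
move=> [uc c_ge3 cyc] wc lt_a d_ge2 d_le adj_last w_last above.
have c_gt0 : 0 < size c by lia.
have le_st : (s <= t)%R by rewrite -w_last; apply: adj_le adj_last.
have wc_arc t' : (t' <= t)%R -> well_covered w t' (arc x0 c a d.+1).
  by move=> le_t't; apply: (arc_well_covered le_t't); rewrite ?w_last.
split=> [||le_s]; [|exact: wc_arc|split; last exact: wc_arc].
  by apply: arc_is_cycle => //; [lia | move=> k _; apply: cycle_nth].
apply: arc_is_cycle => //; first lia; last by rewrite /adj (adj_neq adj_last) w_last lexx.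
move=> k lt_k; have /adj_neq neq := cycle_nth x0 (a + k) cyc c_gt0.
by rewrite /adj neq; apply: le_s.
Qed.

Lemma split_at_min_chord t x0 (c : seq V) i j u v :
  nth x0 c i = u -> nth x0 c j = v -> is_cycle w t c -> well_covered w t c ->
  nonconsec (size c) i j -> adj w t u v -> chords_above t x0 c (w u v) ->
  exists C1 C2,
  [/\ [/\ is_cycle w (w u v) C1, well_covered w (w u v) C1 & size C1 < size c],
      [/\ is_cycle w t C2, well_covered w t C2 & size C2 < size c],
      [/\ u \in C1, v \in C1, u \in C2 & v \in C2]
    & {subset c <= C1 ++ C2}].
Proof.
move=> ciu cjv cyc wc ncij adj_uv above.
have [lt_ij lt_jn d_ge2 d_le] : [/\ i < j, j < size c, 2 <= j - i & j - i + 2 <= size c].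
  by move: ncij; rewrite /nonconsec; split; lia.
have eI : i %% size c = i by rewrite modn_small //; lia.
have eJ : j %% size c = j by rewrite modn_small.
have eIJ : (i + (j - i)) %% size c = j by rewrite subnKC ?modn_small //; lia.
have eJI : (j + (size c - (j - i))) %% size c = i.
  by rewrite (_ : j + _ = i + size c) ?modnDr ?modn_small //; lia.
set A := arc x0 c i (j - i).+1; set B := arc x0 c j (size c - (j - i)).+1.
have [cyA wcA sA] : [/\ is_cycle w t A, well_covered w t A
    & arc_le x0 c i (j - i) (w u v) -> is_cycle w (w u v) A /\ well_covered w (w u v) A].
  apply: min_chord_arc => //; rewrite ?eIJ ?eI ?ciu ?cjv; [lia | by rewrite adjC | by rewrite wsym].
have [cyB wcB sB] : [/\ is_cycle w t B, well_covered w t B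
    & arc_le x0 c j (size c - (j - i)) (w u v) ->
      is_cycle w (w u v) B /\ well_covered w (w u v) B].
  by apply: min_chord_arc => //; rewrite ?eJI ?eJ ?ciu ?cjv //; lia.
have [uA vA] : u \in A /\ v \in A.
  by split; apply/mem_arcP; [exists 0 | exists (j - i)]; rewrite ?addn0 ?eI ?eIJ.
have [uB vB] : u \in B /\ v \in B.
  by split; apply/mem_arcP; [exists (size c - (j - i)) | exists 0]; rewrite ?addn0 ?eJ ?eJI.
have sizeA : size A < size c by rewrite size_arc; lia.
have sizeB : size B < size c by rewrite size_arc; lia.
have cover x : x \in c -> (x \in A) || (x \in B).
  by case/(mem_arc_split x0 lt_ij lt_jn) => ->; rewrite ?orbT.
have := wc x0 i j ncij; rewrite (covers_arc x0 lt_ij lt_jn) /cv ciu cjv => /(_ adj_uv).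
case=> [/sA[cyA' wcA'] | /sB[cyB' wcB']]; [exists A, B | exists B, A]; split=> //.
  by move=> x /cover; rewrite mem_cat.
by move=> x /cover; rewrite mem_cat orbC.
Qed.

End Weights.

Section Reduction.
Variables (R : realDomainType) (V : finType) (w : V -> V -> R) (r : V).
Hypothesis wsym : forall x y, w x y = w y x.

Definition has_bad_config : Prop := exists t, threshold w t /\
  ((exists c, bad_hole w r t c) \/ (exists x u y v, bad_diamond w r t x u y v)).

Definition far t z := (z != r) && ~~ adj w t r z.

Definition clique t (C : seq V) := {in C &, forall a b, a != b -> adj w t a b}.

Lemma far_anti s t z : (s <= t)%R -> far t z -> far s z.
Proof. by rewrite /far => le_st /andP[-> nadj]; apply: contra nadj; apply: adj_mono. Qed.

Lemma far_adj_neq t y z : far t y -> adj w t y z -> z != r.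
Proof. by case/andP=> _ nadj; apply: contraTneq => ->; rewrite (adjC wsym). Qed.

Lemma not_far_adj t z : ~~ far t z -> z != r -> adj w t r z.
Proof. by rewrite /far => /nandP[/negPn-> | /negPn]. Qed.

Lemma not_far_vertex t C : ~ has_far_vertex w r t C -> {in C, forall z, ~~ far t z}.
Proof. by move=> nfar z zC; apply/negP => far_z; apply: nfar; exists z. Qed.

Lemma clique_mono s t C : (s <= t)%R -> clique s C -> clique t C.
Proof. by move=> le_st clC a b aC bC /(clC a b aC bC); apply: adj_mono. Qed.

Lemma nonconsec4 i j : nonconsec 4 i j -> i = 0 /\ j = 2 \/ i = 1 /\ j = 3.
Proof. by rewrite /nonconsec; lia. Qed.

Lemma bad_hole4 t a b c d : uniq [:: a; b; c; d] ->
  adj w t a b -> adj w t b c -> adj w t c d -> adj w t d a ->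
  ~~ adj w t a c -> ~~ adj w t b d -> has_far_vertex w r t [:: a; b; c; d] ->
  bad_hole w r t [:: a; b; c; d].
Proof.
move=> uniq_abcd ab bc cd da nac nbd far_abcd; split=> //.
  by split=> //=; rewrite ab bc cd da.
by move=> x0 i j /nonconsec4[[-> ->] | [-> ->]].
Qed.

Lemma far_apex_hole t p m q : threshold w t -> uniq [:: p; m; q] ->
  adj w t p m -> adj w t q m -> ~~ adj w t p q ->
  far t m -> ~~ far t p -> ~~ far t q -> has_bad_config.
Proof.
move=> thr_t uniq_pmq pm qm npq far_m nfar_p nfar_q.
have rp : adj w t r p.
  by apply: (not_far_adj nfar_p (far_adj_neq far_m _)); rewrite (adjC wsym).
have rq : adj w t r q.
  by apply: (not_far_adj nfar_q (far_adj_neq far_m _)); rewrite (adjC wsym).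
have [neq_mr nrm] := andP far_m.
exists t; split=> //; left; exists [:: r; p; m; q]; apply: bad_hole4; rewrite // 1?(adjC wsym) //.
- move: uniq_pmq; rewrite /= !inE !negb_or => /andP[/andP[-> ->] ->].
  by rewrite (adj_neq rp) (adj_neq rq) eq_sym neq_mr.
- by exists m; rewrite ?inE ?eqxx ?orbT.
Qed.

Lemma diamond_or_hole t p m1 q m2 : threshold w t -> uniq [:: p; m1; q; m2] ->
  adj w t p m1 -> adj w t p m2 -> adj w t q m1 -> adj w t q m2 ->
  adj w t m1 m2 -> ~~ adj w t p q ->
  (w p m1 <= w m1 m2)%R -> (w p m2 <= w m1 m2)%R ->
  [|| far t p, far t m1, far t q | far t m2] -> has_bad_config.
Proof.
move=> thr_t uniq4 pm1 pm2 qm1 qm2 m1m2 npq le_pm1 le_pm2 some_far.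
case: (boolP (far t p || far t q)) => [far_tip | ].
  exists t; split=> //; right; exists p, m1, q, m2; split=> //.
  - by rewrite pm1 pm2 qm1 qm2 m1m2 npq.
  - move=> x0 i j /nonconsec4[[-> ->] | [-> ->]]; rewrite /cv /= ?(negbTE npq) // => _.
    by right=> -[|[|[|[|k]]]] //= _ _; rewrite /cedge /cv //= wsym.
(* A far middle vertex is the apex of the hole r, p, m, q. *)
rewrite negb_or => /andP[nfar_p nfar_q].
move: uniq4; rewrite /= !inE !negb_or.
move=> /and4P[/and3P[neq_pm1 neq_pq neq_pm2] /andP[neq_m1q _] neq_qm2 _].
move: some_far; rewrite (negbTE nfar_p) (negbTE nfar_q) /= => /orP[far_m | far_m].
  apply: (far_apex_hole thr_t _ pm1 qm1 npq far_m) => //.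
  by rewrite /= !inE !negb_or neq_pm1 neq_pq neq_m1q.
apply: (far_apex_hole thr_t _ pm2 qm2 npq far_m) => //.
by rewrite /= !inE !negb_or neq_pm2 neq_pq eq_sym neq_qm2.
Qed.

Lemma clique_cover_split t C1 C2 (c : seq V) a b : clique t C1 -> clique t C2 ->
  {subset c <= C1 ++ C2} -> a \in c -> b \in c -> a != b -> ~~ adj w t a b ->
  exists a' b', [/\ a' \in C1, a' \notin C2, b' \in C2, b' \notin C1 & ~~ adj w t a' b'].
Proof.
move=> cl1 cl2 cover ac bc neq_ab nadj.
have b_out C : clique t C -> a \in C -> b \notin C.
  by move=> clC aC; apply: contraNN nadj => bC; apply: clC.
have a_out C : clique t C -> b \in C -> a \notin C.
  by move=> clC bC; apply: contraNN nadj => aC; apply: clC.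
have [a1 | a1] := boolP (a \in C1).
  have b2 : b \in C2 by move: (cover b bc); rewrite mem_cat (negbTE (b_out _ cl1 a1)).
  by exists a, b; split; rewrite // ?a_out ?b_out.
have a2 : a \in C2 by move: (cover a ac); rewrite mem_cat (negbTE a1).
have b1 : b \in C1 by move: (cover b bc); rewrite mem_cat (negbTE (b_out _ cl2 a2)) orbF.
by exists b, a; split; rewrite // 1?(adjC wsym) ?a_out ?b_out.
Qed.

Section Split.
Variables (t s : R) (C1 C2 : seq V) (u v : V).
Hypotheses (thr_t : threshold w t) (le_st : (s <= t)%R).
Hypotheses (uC1 : u \in C1) (vC1 : v \in C1) (uC2 : u \in C2) (vC2 : v \in C2).
Hypotheses (adj_uv : adj w t u v) (w_uv : w u v = s).

Lemma two_cliques_bad a b : clique s C1 -> clique t C2 -> has_far_vertex w r t C2 ->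
  a \in C1 -> a \notin C2 -> b \in C2 -> b \notin C1 -> ~~ adj w t a b -> has_bad_config.
Proof.
move=> cl1 cl2 [y yC2 far_y] a1 a2 b2 b1 nadj_ab; have {}far_y : far t y := far_y.
have neq_a x : x \in C2 -> a != x by move=> xC2; apply: contraNneq a2 => ->.
have neq_b x : x \in C1 -> b != x by move=> xC1; apply: contraNneq b1 => ->.
have s_au := cl1 a u a1 uC1 (neq_a u uC2).
have s_av := cl1 a v a1 vC1 (neq_a v vC2).
have le_au : (w a u <= w u v)%R by rewrite w_uv; apply: adj_le s_au.
have le_av : (w a v <= w u v)%R by rewrite w_uv; apply: adj_le s_av.
have t_bu := cl2 b u b2 uC2 (neq_b u uC1).
have t_bv := cl2 b v b2 vC2 (neq_b v vC1).
have [neq_uv neq_ab] := (adj_neq adj_uv, neq_a b b2).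
have uniq_aubv : uniq [:: a; u; b; v].
  by rewrite /= !inE !negb_or neq_a // neq_ab neq_a // neq_uv eq_sym neq_b // neq_b.
have [some_far | ] := boolP [|| far t a, far t u, far t b | far t v].
  exact: (diamond_or_hole thr_t uniq_aubv (adj_mono le_st s_au) (adj_mono le_st s_av)
           t_bu t_bv adj_uv nadj_ab le_au le_av).
(* A far vertex y of C2 closes the hole r, a, y, b or replaces b as a tip. *)
rewrite !negb_or => /and4P[nfar_a nfar_u nfar_b nfar_v].
have neq_y x : ~~ far t x -> y != x by apply: contraNneq => <-.
have t_yu := cl2 y u yC2 uC2 (neq_y u nfar_u).
have t_yv := cl2 y v yC2 vC2 (neq_y v nfar_v).
have t_yb := cl2 y b yC2 b2 (neq_y b nfar_b).
have [t_ay | nadj_ay] := boolP (adj w t a y).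
  apply: (far_apex_hole thr_t _ t_ay _ nadj_ab far_y nfar_a nfar_b).
    by rewrite /= !inE !negb_or neq_ab (neq_a y yC2) neq_y.
  by rewrite (adjC wsym).
apply: (diamond_or_hole thr_t _ (adj_mono le_st s_au) (adj_mono le_st s_av)
         t_yu t_yv adj_uv nadj_ay le_au le_av); last by rewrite far_y !orbT.
by rewrite /= !inE !negb_or !neq_a // (eq_sym u y) !neq_y // neq_uv.
Qed.

Lemma near_far_clique_bad : {in C1, forall z, ~~ far s z} -> clique t C2 ->
  has_far_vertex w r t C2 -> has_bad_config.
Proof.
move=> near1 cl2 [y yC2 far_y]; have {}far_y : far t y := far_y.
have yC1 : y \notin C1 by apply/negP => /near1; rewrite (far_anti le_st far_y).
have neq_y x : x \in C1 -> y != x by move=> xC1; apply: contraNneq yC1 => ->.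
have t_yu := cl2 y u yC2 uC2 (neq_y u uC1).
have t_yv := cl2 y v yC2 vC2 (neq_y v vC1).
have s_ru := not_far_adj (near1 u uC1) (far_adj_neq far_y t_yu).
have s_rv := not_far_adj (near1 v vC1) (far_adj_neq far_y t_yv).
have [neq_yr nadj_ry] := andP far_y.
have le_ru : (w r u <= w u v)%R by rewrite w_uv; apply: adj_le s_ru.
have le_rv : (w r v <= w u v)%R by rewrite w_uv; apply: adj_le s_rv.
apply: (diamond_or_hole thr_t _ (adj_mono le_st s_ru) (adj_mono le_st s_rv)
         t_yu t_yv adj_uv nadj_ry le_ru le_rv); last by rewrite far_y !orbT.
rewrite /= !inE !negb_or (adj_neq s_ru) (adj_neq s_rv) (eq_sym r y) neq_yr.
by rewrite (eq_sym u y) !neq_y // (adj_neq adj_uv).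
Qed.

Lemma far_clique_near_bad x : clique s C1 -> {in C2, forall z, ~~ far t z} ->
  x \in C1 -> far t x -> has_bad_config.
Proof.
move=> cl1 near2 xC1 far_x.
have xC2 : x \notin C2 by apply/negP => /near2; rewrite far_x.
have neq_x z : z \in C2 -> x != z by move=> zC2; apply: contraNneq xC2 => ->.
have s_xu := cl1 x u xC1 uC1 (neq_x u uC2).
have s_xv := cl1 x v xC1 vC1 (neq_x v vC2).
have t_ru := not_far_adj (near2 u uC2) (far_adj_neq far_x (adj_mono le_st s_xu)).
have t_rv := not_far_adj (near2 v vC2) (far_adj_neq far_x (adj_mono le_st s_xv)).
have [neq_xr nadj_rx] := andP far_x.
have le_xu : (w x u <= w u v)%R by rewrite w_uv; apply: adj_le s_xu.
have le_xv : (w x v <= w u v)%R by rewrite w_uv; apply: adj_le s_xv.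
apply: (diamond_or_hole thr_t _ (adj_mono le_st s_xu) (adj_mono le_st s_xv)
         t_ru t_rv adj_uv _ le_xu le_xv); last by rewrite far_x.
  rewrite /= !inE !negb_or neq_xr !neq_x // (adj_neq adj_uv).
  by rewrite (eq_sym u r) (adj_neq t_ru) (adj_neq t_rv).
by rewrite (adjC wsym).
Qed.

Lemma split_bad (c : seq V) : {subset c <= C1 ++ C2} ->
  (has_far_vertex w r s C1 -> clique s C1) -> (has_far_vertex w r t C2 -> clique t C2) ->
  (exists2 a, a \in c & exists2 b, b \in c & (a != b) && ~~ adj w t a b) ->
  has_far_vertex w r t c -> has_bad_config.
Proof.
move=> cover tame1 tame2 [a ac [b bc /andP[neq_ab nadj_ab]]] [x xc far_x].
have {}far_x : far t x := far_x.
have [far2 | /not_far_vertex near2] := classic (has_far_vertex w r t C2).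
  have [far1 | /not_far_vertex near1] := classic (has_far_vertex w r s C1).
    have cl1 := tame1 far1; have cl2 := tame2 far2.
    have [a' [b' [a1 a2 b2 b1 nadj]]] :=
      clique_cover_split (clique_mono le_st cl1) cl2 cover ac bc neq_ab nadj_ab.
    exact: (two_cliques_bad cl1 cl2 far2 a1 a2 b2 b1 nadj).
  exact: (near_far_clique_bad near1 (tame2 far2) far2).
have xC1 : x \in C1.
  by move: (cover x xc); rewrite mem_cat => /orP[// | /near2]; rewrite far_x.
have [far1 | /not_far_vertex near1] := classic (has_far_vertex w r s C1).
  exact: (far_clique_near_bad (tame1 far1) near2 xC1 far_x).
by move: (near1 x xC1); rewrite (far_anti le_st far_x).
Qed.

End Split.

Lemma triangle_clique t c : is_cycle w t c -> size c = 3 -> clique t c.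
Proof.
case: c => [|x [|y [|z []]]] // [_ _ /=]; rewrite andbT => /and3P[xy yz zx] _.
by move=> a b; rewrite !inE => /or3P[] /eqP-> /or3P[] /eqP->; rewrite ?eqxx // 1?(adjC wsym).
Qed.

Lemma chordless_bad_hole t x0 c : violated_cycle w r t c ->
  (forall i j, nonconsec (size c) i j -> ~~ adj w t (cv x0 c i) (cv x0 c j)) ->
  bad_hole w r t c.
Proof.
move=> [cyc _ [a ac [b bc /andP[neq_ab nadj_ab]]] far_c] chordless; split=> //.
  have [_ c_ge3 _] := cyc; rewrite leqNgt; apply/negP => c_lt4.
  have c3 : size c = 3 by lia.
  by rewrite (triangle_clique cyc c3 ac bc neq_ab) in nadj_ab.
move=> y0 i j ncij; have [lt_i lt_j] : i < size c /\ j < size c.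
  by move: ncij; rewrite /nonconsec; lia.
by rewrite /cv !(set_nth_default x0) //; apply: chordless.
Qed.

Lemma violated_cycle_bad t c : threshold w t -> violated_cycle w r t c -> has_bad_config.
Proof.
have [n] := ubnP (size c); elim: n t c => // n IH t c /ltnSE le_cn thr_t viol.
case: (classic has_bad_config) => // nbad.
have tame t' C : threshold w t' -> is_cycle w t' C -> well_covered w t' C ->
    size C < size c -> has_far_vertex w r t' C -> clique t' C.
  move=> thr' cyC wcC ltC farC a b aC bC neq_ab; apply/negPn/negP => nadj.
  apply: nbad (IH t' C _ thr' _); first lia.
  by split=> //; exists a => //; exists b; rewrite ?neq_ab.
have [cyc wc non_clique far_c] := viol.
case: (chordless_or_min_chord w t r c) => [chordless | [i [j [ncij adj_ij above]]]].
  by exists t; split=> //; left; exists c; apply: chordless_bad_hole chordless.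
have [C1 [C2 [[cy1 wc1 lt1] [cy2 wc2 lt2] [u1 v1 u2 v2] cover]]] :=
  split_at_min_chord wsym erefl erefl cyc wc ncij adj_ij above.
apply: (split_bad thr_t (adj_le adj_ij) u1 v1 u2 v2 adj_ij erefl cover) => //.
  exact: tame (threshold_adj thr_t adj_ij) cy1 wc1 lt1.
exact: tame thr_t cy2 wc2 lt2.
Qed.

Lemma bad_hole_violated t c : bad_hole w r t c -> violated_cycle w r t c.
Proof.
move=> [[uc c_ge3 cyc] c_ge4 chordless far_c]; split=> //.
  by move=> x0 i j /chordless/negbTE->.
have nc02 : nonconsec (size c) 0 2 by rewrite /nonconsec; lia.
have [lt_0 lt_2] : 0 < size c /\ 2 < size c by split; apply: leq_trans c_ge4.
exists (nth r c 0); first exact: mem_nth.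
exists (nth r c 2); first exact: mem_nth.
by rewrite nth_uniq ?(chordless r 0 2 nc02).
Qed.

Lemma bad_diamond_violated t x u y v :
  bad_diamond w r t x u y v -> violated_cycle w r t [:: x; u; y; v].
Proof.
move=> [uniq_xuyv /and5P[xu xv yu yv /andP[uv nxy]] wc far_tip]; split=> //.
- by split=> //=; rewrite xu (adjC wsym) yu yv (adjC wsym) xv.
- exists x; rewrite ?inE ?eqxx //; exists y; rewrite ?inE ?eqxx ?orbT // nxy andbT.
  by move: uniq_xuyv; rewrite /= !inE !negb_or => /and3P[/and3P[]].
- by case/orP: far_tip; [exists x | exists y]; rewrite ?inE ?eqxx ?orbT.
Qed.

End Reduction.

Theorem corollary1 (R : realDomainType) (V : finType) (r : V)
    (w : V -> V -> R) (wsym : forall x y, w x y = w y x) :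
  (forall t, threshold w t ->
     (forall c, ~ bad_hole w r t c) /\
     (forall x u y v, ~ bad_diamond w r t x u y v)) <->
  (forall t, threshold w t -> forall c, ~ violated_cycle w r t c).
Proof.
split=> [no_bad t thr_t c /(violated_cycle_bad wsym thr_t) | no_violated t thr_t].
  case=> t' [thr' bad]; have [no_hole no_diamond] := no_bad t' thr'.
  by case: bad => [[c' /no_hole] | [x [u [y [v /no_diamond]]]]].
split=> [c /bad_hole_violated | x u y v /(bad_diamond_violated wsym)].
  exact: no_violated.
exact: no_violated.
Qed.
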